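(* Let $Q\subset\mathbb{R}^d$ be a lattice polytope with vertex set $V$, let $\Delta$ be a flag unimodular triangulation of $Q$ with vertex set $V$, and let $w:V\to\mathbb{R}$. Then the following are equivalent: (i) $\Delta$ is the regular triangulation of $Q$ induced by $w$; (ii) for every edge $\{v_1,v_2\}$ of $\Delta$ and every pair of vertices $\{v'_1,v'_2\}\subseteq V$ with $\{v'_1,v'_2\}\ne\{v_1,v_2\}$ and $v_1+v_2=v'_1+v'_2$, we have $w(v_1)+w(v_2)<w(v'_1)+w(v'_2)$.
   Context: A triangulation of a polytope $Q$ with vertex set $V$ is a simplicial complex on (a subset of) $V$ whose faces are affinely independent and whose simplices cover $Q$ and intersect properly in common faces. A lattice polytope has vertices in $\mathbb{Z}^d$; a triangulation is unimodular if every full-dimensional simplex is an affine lattice basis (has minimal possible volume $1/d!$ for full-dimensional $Q$). It is flag if it is the clique complex of its 1-skeleton. The regular triangulation (or subdivision) induced by $w:V\to\mathbb{R}$ is the projection of the lower faces of $\mathrm{conv}\{(v,w(v)):v\in V\}$; equivalently, $\Delta$ is the regular triangulation for $w$ iff for every $x\in Q$ the unique convex combination of vertices of a face of $\Delta$ giving $x$ is the unique convex combination $x=\sum_{v\in V}\lambda_v v$ minimizing $\sum_v\lambda_v w(v)$. *)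

(* Points of Z^d are 'rV[int]_d; real coordinates are taken in an
   arbitrary real field R (the paper's R is an instance). *)
From HB Require Import structures.
From mathcomp Require Import all_boot all_order all_algebra.
Set Implicit Arguments. Unset Strict Implicit. Unset Printing Implicit Defensive.
Import Order.TTheory GRing.Theory Num.Theory.
Local Open Scope ring_scope.

Section PolytopeDefs.
Variables (R : realFieldType) (d : nat) (T : finType) (pt : T -> 'rV[int]_d).

Definition rpt (v : T) : 'rV[R]_d := map_mx (fun z : int => z%:~R) (pt v).

Definition supported (A : {set T}) (c : T -> R) := forall v, v \notin A -> c v = 0.

Definition lincomb (c : T -> R) : 'rV[R]_d := \sum_v c v *: rpt v.

Definition convex_weights (c : T -> R) := (forall v, 0 <= c v) /\ \sum_v c v = 1.

Definition in_conv (A : {set T}) (x : 'rV[R]_d) :=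
  exists c, [/\ convex_weights c, supported A c & lincomb c = x].

Definition in_aff (A : {set T}) (x : 'rV[R]_d) :=
  exists c, [/\ supported A c, \sum_v c v = 1 & lincomb c = x].

Definition aff_indep (A : {set T}) :=
  forall c, supported A c -> \sum_v c v = 0 -> lincomb c = 0 -> forall v, c v = 0.

Definition is_vertex_set := forall v, ~ in_conv [set~ v] (rpt v).

Definition triangulation (D : {set {set T}}) :=
  [/\ (forall A B : {set T}, A \in D -> B \subset A -> B \in D),
      (forall v, [set v] \in D),
      (forall A, A \in D -> aff_indep A),
      (forall x, in_conv [set: T] x -> exists2 A, A \in D & in_conv A x) &
      (forall (A B : {set T}) x, A \in D -> B \in D -> in_conv A x -> in_conv B x ->
         in_conv (A :&: B) x)].

(* full-dimensional face: its affine span contains all of V (hence aff Q) *)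
Definition fulldim (A : {set T}) := forall v, in_aff A (rpt v).

(* every full-dimensional simplex is an affine lattice basis (of aff Q ∩ Z^d) *)
Definition unimodular (D : {set {set T}}) :=
  forall A, A \in D -> fulldim A ->
  forall z : 'rV[int]_d, in_aff A (map_mx (fun k : int => k%:~R) z) ->
  exists c : T -> int,
    [/\ forall v, v \notin A -> c v = 0, \sum_v c v = 1 & \sum_v c v *: pt v = z].

Definition flag (D : {set {set T}}) :=
  forall A : {set T}, (forall u v, u \in A -> v \in A -> [set u; v] \in D) -> A \in D.

(* D is the regular triangulation induced by w: for each x in Q, the convex
   combination of x supported on a face of D is the unique minimizer of
   sum_v lambda_v w(v) among all convex combinations of x. *)
Definition regular_for (w : T -> R) (D : {set {set T}}) :=
  forall l m : T -> R, convex_weights l -> convex_weights m ->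
    lincomb l = lincomb m -> [set v | l v != 0] \in D ->
    (exists v, m v != l v) ->
    \sum_v l v * w v < \sum_v m v * w v.

End PolytopeDefs.

From HB Require Import structures.
From mathcomp Require Import all_boot all_order all_algebra.
From mathcomp Require Import zify ring lra.
From Stdlib Require Import Classical.
Set Implicit Arguments. Unset Strict Implicit. Unset Printing Implicit Defensive.
Import Order.TTheory GRing.Theory Num.Theory.
Local Open Scope ring_scope.

(* (i) => (ii): compare the two representations (v1 + v2)/2 = (u1 + u2)/2 in the definition
   of regularity.
   (ii) => (i): if the support of a convex combination is not a face, by flagness it contains
   a non-edge {u1, u2}.  The midpoint of u1 and u2 lies in a face, which extends to a
   full-dimensional one; unimodularity makes twice its barycentric coordinates integral, so
   u1 + u2 = v1 + v2 for an edge {v1, v2}, and shifting weight from u1, u2 to v1, v2 keeps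
   the point and, by (ii), strictly lowers the cost.  A cost minimizer exists by linear
   programming, hence is supported on a face and equals the face representation, which thus
   beats every other representation. *)

Lemma ex_min_functional (R : realDomainType) (X : finType) (P : X -> R -> Prop) :
  (forall x y y', P x y -> P x y' -> y = y') -> (exists x y, P x y) ->
  exists y0, (exists x, P x y0) /\ forall x y, P x y -> y0 <= y.
Proof.
move=> Pfun exP.
suff [y0 [ex0 min0]] : exists y0, (exists x, P x y0) /\
    forall x y, x \in enum X -> P x y -> y0 <= y.
  by exists y0; split => // x y; apply: min0; rewrite mem_enum.
elim: (enum X) => [|x s [y0 [ex0 min0]]].
  by case: exP => x [y Pxy]; exists y; split => //; exists x.
case: (classic (exists y, P x y)) => [[y Pxy]|noPx].
- have [le_y0y|lt_yy0] := lerP y0 y.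
    exists y0; split => // x' y'; rewrite inE => /orP[/eqP->|x's] Px'y'.
      by rewrite (Pfun _ _ _ Px'y' Pxy).
    exact: min0 x's Px'y'.
  exists y; split; first by exists x.
  move=> x' y'; rewrite inE => /orP[/eqP->|x's] Px'y'.
    by rewrite (Pfun _ _ _ Px'y' Pxy).
  exact: le_trans (ltW lt_yy0) (min0 _ _ x's Px'y').
- exists y0; split => // x' y'; rewrite inE => /orP[/eqP->|x's] Px'y'.
    by case: noPx; exists y'.
  exact: min0 x's Px'y'.
Qed.

Section LinearProgram.
Variables (R : realFieldType) (I : finType) (K : Type).
Variables (a : K -> I -> R) (b : K -> R) (Z : {set I}) (cost : I -> R).

Definition lp_feasible (m : I -> R) :=
  [/\ forall i, 0 <= m i, forall i, i \notin Z -> m i = 0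
    & forall k, \sum_i m i * a k i = b k].

Definition lp_kernel (z : I -> R) := forall k, \sum_i z i * a k i = 0.

Definition lp_indep (S : {set I}) :=
  forall z, (forall i, i \notin S -> z i = 0) -> lp_kernel z -> forall i, z i = 0.

Definition supp (m : I -> R) := [set i | m i != 0].

Definition lp_cost (m : I -> R) := \sum_i m i * cost i.

Lemma notin_supp m i : i \notin supp m -> m i = 0.
Proof. by rewrite inE negbK => /eqP. Qed.

Lemma lp_kernelZ s z : lp_kernel z -> lp_kernel (fun i => s * z i).
Proof.
by move=> zK k; under eq_bigr do rewrite -mulrA; rewrite -mulr_sumr zK mulr0.
Qed.

Lemma lp_costZ s z : lp_cost (fun i => s * z i) = s * lp_cost z.
Proof. by rewrite /lp_cost mulr_sumr; apply: eq_bigr => i _; rewrite mulrA. Qed.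

Lemma lp_dependent S : ~ lp_indep S -> exists z,
  [/\ forall i, i \notin S -> z i = 0, lp_kernel z, exists i, z i != 0 & lp_cost z <= 0].
Proof.
move=> depS.
have [z [zS zK [i zi]]] : exists z,
    [/\ forall i, i \notin S -> z i = 0, lp_kernel z & exists i, z i != 0].
  apply: NNPP => no_z; apply: depS => z zS zK i; apply: NNPP => zi.
  by apply: no_z; exists z; split => //; exists i; apply/eqP.
pose s : R := if lp_cost z <= 0 then 1 else -1.
have s_neq0 : s != 0 by rewrite /s; case: ifP; rewrite ?oppr_eq0 oner_eq0.
exists (fun i => s * z i); split.
- by move=> j jS; rewrite zS ?mulr0.
- exact: lp_kernelZ.
- by exists i; rewrite mulf_neq0.
- rewrite lp_costZ /s; case: ifP => [|/negbT]; first by rewrite mul1r.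
  by rewrite -ltNge mulN1r oppr_le0 => /ltW.
Qed.

Variable k1 : K.
Hypothesis a_k1 : forall i, a k1 i = 1.

Lemma lp_kernel_has_neg z i0 : lp_kernel z -> z i0 != 0 -> exists j, z j < 0.
Proof.
move=> zK zi0; apply: NNPP => no_neg.
have z_ge0 i : 0 <= z i by rewrite leNgt; apply/negP => zi; apply: no_neg; exists i.
have sum_z : \sum_i z i = 0.
  by rewrite -[RHS](zK k1); apply: eq_bigr => i _; rewrite a_k1 mulr1.
by move/eqP: zi0; apply; apply: (psumr_eq0P (fun i _ => z_ge0 i) sum_z).
Qed.

(* The ratio test of the simplex method: move along z until a coordinate of m vanishes. *)
Lemma lp_ratio_step m z j0 : lp_feasible m -> (forall i, i \notin supp m -> z i = 0) ->
  lp_kernel z -> z j0 < 0 -> lp_cost z <= 0 ->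
  exists m', [/\ lp_feasible m', supp m' \proper supp m & lp_cost m' <= lp_cost m].
Proof.
move=> [m_ge0 mZ mb] zS zK zj0 cost_z.
have [j zj tmin] := @arg_minP _ R _ j0 (fun j => z j < 0) (fun j => m j / - z j) zj0.
pose t := m j / - z j.
have t_ge0 : 0 <= t by rewrite divr_ge0 // oppr_ge0 ltW.
pose m' i := m i + t * z i.
have m'_supp i : i \notin supp m -> m' i = 0.
  by move=> iS; rewrite /m' zS // notin_supp // mulr0 addr0.
have m'j : m' j = 0.
  by rewrite /m' /t invrN mulrN mulNr -mulrA mulVf ?mulr1 ?subrr // lt_eqF.
have m'_sum (f : I -> R) : \sum_i m' i * f i = \sum_i m i * f i + t * \sum_i z i * f i.
  rewrite mulr_sumr -big_split; by apply: eq_bigr => i _; rewrite mulrDl mulrA.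
exists m'; split.
- split.
  + move=> i; rewrite /m'; case: (ltP (z i) 0) => zi; last by rewrite addr_ge0 // mulr_ge0.
    have := tmin i zi; rewrite -/t ler_pdivlMr ?oppr_gt0 // => tz.
    by rewrite -(opprK (t * z i)) subr_ge0 -mulrN.
  + by move=> i iZ; apply: m'_supp; rewrite inE mZ // eqxx.
  + by move=> k; rewrite m'_sum zK mulr0 addr0.
- apply/properP; split.
    by apply/subsetP => i; apply: contraTT => iS; rewrite inE negbK m'_supp.
  exists j; last by rewrite inE m'j eqxx.
  by rewrite inE; apply: contraTneq zj => mj; rewrite zS ?ltxx // inE mj eqxx.
- by rewrite /lp_cost m'_sum gerDl mulr_ge0_le0.
Qed.

Lemma lp_feasible_indep_supp m : lp_feasible m ->
  exists m', [/\ lp_feasible m', lp_indep (supp m') & lp_cost m' <= lp_cost m].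
Proof.
have [n] := ubnP #|supp m|; elim: n m => // n IH m le_m feas_m.
case: (classic (lp_indep (supp m))) => [indep_m|dep_m]; first by exists m.
have [z [zS zK [i0 zi0] cost_z]] := lp_dependent dep_m.
have [j0 zj0] := lp_kernel_has_neg zK zi0.
have [m' [feas_m' sub_m' cost_m']] := lp_ratio_step feas_m zS zK zj0 cost_z.
have [|m'' [? ? cost_m'']] := IH m' _ feas_m'; first exact: leq_trans (proper_card sub_m') _.
by exists m''; split => //; apply: le_trans cost_m'.
Qed.

Lemma lp_feasible_eq m1 m2 : lp_feasible m1 -> lp_feasible m2 -> supp m1 = supp m2 ->
  lp_indep (supp m1) -> m1 =1 m2.
Proof.
move=> [_ _ m1b] [_ _ m2b] eq_supp indep i; apply/eqP; rewrite -subr_eq0; apply/eqP.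
apply: (indep (fun i => m1 i - m2 i)) => [j jS|k].
  by rewrite notin_supp // notin_supp -?eq_supp // subrr.
by under eq_bigr do rewrite mulrBl; rewrite sumrB m1b m2b subrr.
Qed.

Lemma lp_min_exists : (exists m, lp_feasible m) ->
  exists m0, lp_feasible m0 /\ forall m, lp_feasible m -> lp_cost m0 <= lp_cost m.
Proof.
move=> [m1 feas_m1].
pose basic S c := exists m, [/\ lp_feasible m, lp_indep S, supp m = S & lp_cost m = c].
have basic_fun S c c' : basic S c -> basic S c' -> c = c'.
  move=> [m [fm im sm <-]] [m' [fm' _ sm' <-]]; apply: eq_bigr => i _.
  by rewrite (lp_feasible_eq fm fm') ?sm ?sm'.
have basic_ex : exists S c, basic S c.
  have [m [fm im _]] := lp_feasible_indep_supp feas_m1.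
  by exists (supp m), (lp_cost m), m.
have [c0 [[S [m0 [feas_m0 _ _ <-]]] min_c0]] := ex_min_functional basic_fun basic_ex.
exists m0; split => // m /lp_feasible_indep_supp [m' [fm' im' cm']].
by apply: le_trans cm'; apply: (min_c0 (supp m')); exists m'.
Qed.

End LinearProgram.

Section ConvexRepresentation.
Variables (R : realFieldType) (T : finType).

Definition conv_rep n (g : T -> 'rV[R]_n) (y : 'rV[R]_n) (Z : {set T}) (c : T -> R) :=
  [/\ convex_weights c, supported Z c & \sum_v c v *: g v = y].

Lemma sum_scale_coord n (g : T -> 'rV[R]_n) (c : T -> R) j :
  (\sum_v c v *: g v) 0 j = \sum_v c v * g v 0 j.
Proof. by rewrite summxE; apply: eq_bigr => v _; rewrite mxE. Qed.

(* One constraint per coordinate, and [None] for the constraint [\sum_v c v = 1]. *)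
Definition conv_constraint n (g : T -> 'rV[R]_n) k v : R :=
  if k is Some j then g v 0 j else 1.
Definition conv_bound n (y : 'rV[R]_n) k : R := if k is Some j then y 0 j else 1.

Lemma conv_repE n (g : T -> 'rV[R]_n) y Z c :
  conv_rep g y Z c <-> lp_feasible (conv_constraint g) (conv_bound y) Z c.
Proof.
have sum1 : \sum_v c v * 1 = \sum_v c v by apply: eq_bigr => v _; rewrite mulr1.
rewrite /lp_feasible /conv_constraint /conv_bound; split.
- case=> [[c_ge0 c1] cZ cy]; split => //; case => [j|]; last by rewrite sum1.
  by rewrite -cy sum_scale_coord.
- case=> c_ge0 cZ cb; split => //; first by split => //; rewrite -sum1 (cb None).
  by apply/rowP => j; rewrite sum_scale_coord -(cb (Some j)).
Qed.

Lemma conv_rep_min n (g : T -> 'rV[R]_n) y Z (cost : T -> R) :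
  (exists c, conv_rep g y Z c) ->
  exists c0, conv_rep g y Z c0 /\
    forall c, conv_rep g y Z c -> \sum_v c0 v * cost v <= \sum_v c v * cost v.
Proof.
move=> [c /conv_repE feas_c].
have [|c0 [feas_c0 min_c0]] :=
  @lp_min_exists _ _ _ (conv_constraint g) (conv_bound y) Z cost None (fun _ => erefl).
  by exists c.
by exists c0; split => [|c' /conv_repE]; [apply/conv_repE | apply: min_c0].
Qed.

End ConvexRepresentation.

Lemma sum_delta_scale (S : pzRingType) (V : lmodType S) (T : finType) (f : T -> V) a :
  \sum_v ((v == a)%:R : S) *: f v = f a.
Proof. by rewrite (bigD1 a) //= eqxx scale1r big1 ?addr0 // => v /negbTE ->; rewrite scale0r. Qed.

Lemma sum_delta_mul (S : pzRingType) (T : finType) (f : T -> S) a :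
  \sum_v (v == a)%:R * f v = f a.
Proof. by rewrite (bigD1 a) //= eqxx mul1r big1 ?addr0 // => v /negbTE ->; rewrite mul0r. Qed.

Lemma sum_delta (S : pzRingType) (T : finType) (a : T) : \sum_v ((v == a)%:R : S) = 1.
Proof. by rewrite -[RHS](sum_delta_mul (fun _ => 1) a); apply: eq_bigr => v _; rewrite mulr1. Qed.

Lemma barycenter_weights (R : realFieldType) (T : finType) (A : {set T}) : A != set0 ->
  exists beta : T -> R,
    [/\ convex_weights beta, supported A beta & forall u, u \in A -> beta u != 0].
Proof.
move=> A0; pose N : R := #|A|%:R.
have N_neq0 : N != 0 by rewrite pnatr_eq0 -lt0n card_gt0.
exists (fun u => (u \in A)%:R / N); split.
- split; first by move=> u; rewrite divr_ge0 ?ler0n.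
  rewrite -mulr_suml; have -> : \sum_u ((u \in A)%:R : R) = N.
    by rewrite /N -sum1_card natr_sum [RHS]big_mkcond; apply: eq_bigr => u _; case: (u \in A).
  exact: divff.
- by move=> u /negbTE uA; rewrite uA mul0r.
- by move=> u ->; rewrite mul1r invr_eq0.
Qed.

Section Faces.
Variables (R : realFieldType) (d : nat) (T : finType) (pt : T -> 'rV[int]_d).

Local Notation rp := (rpt R pt).
Local Notation lc := (@lincomb R d T pt).

Lemma lincomb_coord (c : T -> R) j : lc c 0 j = \sum_v c v * rp v 0 j.
Proof. exact: sum_scale_coord. Qed.

Lemma lincombD x y (f g : T -> R) :
  lc (fun v => x * f v + y * g v) = x *: lc f + y *: lc g.
Proof.
apply/rowP => j; rewrite !mxE !lincomb_coord !mulr_sumr -big_split /=.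
by apply: eq_bigr => v _; rewrite mulrDl !mulrA.
Qed.

Lemma lincombZ x (f : T -> R) : lc (fun v => x * f v) = x *: lc f.
Proof. by rewrite /lincomb scaler_sumr; apply: eq_bigr => v _; rewrite scalerA. Qed.

Lemma lincomb_int (c : T -> int) :
  lc (fun v => (c v)%:~R) = map_mx (fun k : int => k%:~R) (\sum_v c v *: pt v).
Proof.
apply/rowP => k; rewrite lincomb_coord !mxE summxE rmorph_sum.
by apply: eq_bigr => v _; rewrite !mxE /= intrM.
Qed.

Lemma lincomb_delta (a : T) : lc (fun v => (v == a)%:R) = rp a.
Proof. exact: sum_delta_scale. Qed.

Lemma aff_indep_eq (A : {set T}) (f g : T -> R) : aff_indep R pt A ->
  supported A f -> supported A g -> \sum_v f v = \sum_v g v -> lc f = lc g -> f =1 g.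
Proof.
move=> indepA fA gA sum_fg lc_fg v; apply/eqP; rewrite -subr_eq0; apply/eqP.
apply: (indepA (fun v => f v - g v)).
- by move=> u uA; rewrite fA // gA // subrr.
- by rewrite sumrB sum_fg subrr.
- rewrite /lincomb; under eq_bigr do rewrite scalerBl.
  by rewrite sumrB -/(lc f) -/(lc g) lc_fg subrr.
Qed.

Lemma in_conv_convex (A : {set T}) (x y : 'rV[R]_d) s : in_conv pt A x -> in_conv pt A y ->
  0 <= s <= 1 -> in_conv pt A (s *: x + (1 - s) *: y).
Proof.
move=> [f [[f_ge0 f1] fA fx]] [g [[g_ge0 g1] gA gy]] /andP [s_ge0 s_le1].
exists (fun v => s * f v + (1 - s) * g v); split.
- split; first by move=> v; rewrite addr_ge0 // mulr_ge0 // subr_ge0.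
  by rewrite big_split /= -!mulr_sumr f1 g1 !mulr1 addrC subrK.
- by move=> v vA; rewrite fA // gA // !mulr0 addr0.
- by rewrite lincombD fx gy.
Qed.

Section Line.
Variables (p e : 'rV[R]_d) (j : 'I_d).
Hypothesis e_j : e 0 j != 0.

Let q t := p + t *: e.

(* The parameter of the line is minimized by linear programming on the weights, after
   encoding "lc c lies on the line" as the linear constraint [\sum_u c u *: g u = 0]. *)
Lemma in_conv_line_min (C : {set T}) : (exists t, in_conv pt C (q t)) ->
  exists t0, in_conv pt C (q t0) /\ forall t, in_conv pt C (q t) -> t0 <= t.
Proof.
move=> [t1 [c1 [c1w c1C c1q]]].
pose phi (y : 'rV[R]_d) := (y 0 j - p 0 j) / e 0 j.
pose g u := rp u - p - phi (rp u) *: e.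
have phi_q t : phi (q t) = t by rewrite /phi /q !mxE addrAC subrr add0r mulfK.
have phi_lc c : convex_weights c -> \sum_u c u * phi (rp u) = phi (lc c).
  move=> [_ c1s]; rewrite /phi lincomb_coord; under eq_bigr do rewrite mulrA mulrBr.
  by rewrite -mulr_suml sumrB -mulr_suml c1s mul1r.
have sum_g c : convex_weights c -> \sum_u c u *: g u = lc c - q (phi (lc c)).
  move=> cw; rewrite -phi_lc //; case: cw => _ c1s.
  under eq_bigr do rewrite !scalerBr scalerA.
  by rewrite !sumrB -!scaler_suml c1s scale1r /q opprD addrA.
have c1g : conv_rep g 0 C c1 by split => //; rewrite sum_g // c1q phi_q subrr.
have [c0 [[c0w c0C c0g] c0min]] := conv_rep_min (fun u => phi (rp u)) (ex_intro _ c1 c1g).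
exists (phi (lc c0)); split.
  by exists c0; split => //; apply/eqP; rewrite -subr_eq0 -sum_g // c0g.
move=> t [c [cw cC cq]]; rewrite -phi_lc // -(phi_q t) -cq -phi_lc //.
by apply: c0min; split => //; rewrite sum_g // cq phi_q subrr.
Qed.

Lemma in_conv_line_near0 (C : {set T}) : exists2 del, 0 < del &
  forall t, 0 <= t < del -> in_conv pt C (q t) -> in_conv pt C (q 0).
Proof.
case: (classic (exists t, in_conv pt C (q t))) => [/in_conv_line_min|no_t]; last first.
  by exists 1 => // t _ Cqt; case: no_t; exists t.
move=> [t0 [Cqt0 t0min]]; have [t0_le0|t0_gt0] := lerP t0 0; last first.
  by exists t0 => // t /andP [_ lt_tt0] /t0min; rewrite leNgt lt_tt0.
exists 1 => // t /andP [t_ge0 _] Cqt.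
have [eq_tt0|neq_tt0] := eqVneq t t0.
  by have -> : 0 = t by apply/le_anti; rewrite t_ge0 eq_tt0 t0_le0.
have t0t_gt0 : 0 < t - t0 by rewrite subr_gt0 lt_def neq_tt0 t0min.
have -> : q 0 = (t / (t - t0)) *: q t0 + (1 - t / (t - t0)) *: q t.
  by apply/rowP => k; rewrite /q !mxE; field; rewrite gt_eqF.
apply: in_conv_convex => //.
by rewrite divr_ge0 ?(ltW t0t_gt0) //= ler_pdivrMr // mul1r lerDl oppr_ge0.
Qed.

Lemma in_conv_line_near0_all : exists2 del, 0 < del &
  forall C t, 0 <= t < del -> in_conv pt C (q t) -> in_conv pt C (q 0).
Proof.
suff [del del_gt0 near0] : exists2 del, 0 < del & forall C t, C \in enum {set T} ->
    0 <= t < del -> in_conv pt C (q t) -> in_conv pt C (q 0).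
  by exists del => // C t; apply: near0; rewrite mem_enum.
elim: (enum _) => [|C s [del1 del1_gt0 near1]]; first by exists 1.
have [del2 del2_gt0 near2] := in_conv_line_near0 C.
exists (Num.min del1 del2); first by rewrite lt_min del1_gt0.
move=> C' t; rewrite inE lt_min => /orP [/eqP-> | C's] /and3P [t_ge0 t_del1 t_del2].
  by apply: near2; rewrite t_ge0.
by apply: near1; rewrite ?t_ge0.
Qed.

End Line.

Lemma not_fulldim (A : {set T}) : ~ fulldim R pt A -> exists v, ~ in_aff pt A (rp v).
Proof.
move=> A_low; apply: NNPP => all_v; apply: A_low => v.
by apply: NNPP => vA; apply: all_v; exists v.
Qed.

Variable D : {set {set T}}.
Hypothesis tri : triangulation R pt D.

Lemma face_rep_uniq (l m : T -> R) : convex_weights l -> convex_weights m -> lc l = lc m ->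
  supp l \in D -> supp m \in D -> l =1 m.
Proof.
move=> lw mw lm lD mD; case: tri => _ _ indep _ meet.
have [c [[_ c1] cC cl]] : in_conv pt (supp l :&: supp m) (lc l).
  by apply: meet => //; [exists l | exists m; rewrite lm]; split => //; apply: notin_supp.
case: lw mw => _ l1 [_ m1].
have c_l : supported (supp l) c by move=> v /negbTE vl; apply: cC; rewrite inE vl.
have c_m : supported (supp m) c by move=> v /negbTE vm; apply: cC; rewrite inE vm andbF.
have l_c := aff_indep_eq (indep _ lD) (notin_supp (m := l)) c_l (etrans l1 (esym c1)) (esym cl).
have m_c := aff_indep_eq (indep _ mD) (notin_supp (m := m)) c_m (etrans m1 (esym c1))
  (etrans (esym lm) (esym cl)).
by move=> v; rewrite l_c m_c.
Qed.

Lemma face_sub_of_pos_weights (A C : {set T}) (beta : T -> R) : A \in D -> C \in D ->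
  convex_weights beta -> supported A beta -> (forall u, u \in A -> beta u != 0) ->
  in_conv pt C (lc beta) -> A \subset C.
Proof.
move=> AD CD [b_ge0 b1] bA b_neq0 Cb; case: tri => _ _ indep _ meet.
have [c [[_ c1] cAC cb]] := meet _ _ _ AD CD (ex_intro _ beta (And3 (conj b_ge0 b1) bA erefl)) Cb.
have cA : supported A c by move=> v /negbTE vA; apply: cAC; rewrite inE vA.
have b_c := aff_indep_eq (indep _ AD) bA cA (etrans b1 (esym c1)) (esym cb).
apply/subsetP => u uA; apply: contraR (b_neq0 u uA) => uC.
by rewrite b_c cAC // inE (negbTE uC) andbF.
Qed.

(* Push the barycenter p of A slightly towards a point v off the affine span of A: the
   face C carrying the pushed point also carries p, hence contains A, and C <> A. *)
Lemma face_grow (A : {set T}) : A \in D -> A != set0 -> ~ fulldim R pt A ->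
  exists2 C, C \in D & A \proper C.
Proof.
move=> AD A0 A_low.
have [v vA] := not_fulldim A_low.
have [beta [[b_ge0 b1] bA b_neq0]] := barycenter_weights R A0.
pose p := lc beta; pose e := rp v - p.
have [j e_j] : exists j, e 0 j != 0.
  apply: NNPP => e0; apply: vA; exists beta; split => //.
  apply/esym/eqP; rewrite -subr_eq0 -/p -/e; apply/eqP/rowP => k; rewrite !mxE.
  by apply: NNPP => ek; apply: e0; exists k; apply/eqP; rewrite /e !mxE.
have [del del_gt0 near0] := in_conv_line_near0_all p e_j.
pose t := Num.min del 1 / 2.
have t_gt0 : 0 < t by rewrite divr_gt0 // lt_min del_gt0 ltr01.
have t_lt : t < Num.min del 1.
  by rewrite ltr_pdivrMr // ltr_pMr ?ltr1n // lt_min del_gt0 ltr01.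
have t_del : t < del by rewrite (lt_le_trans t_lt) // ge_min lexx.
have t_le1 : t <= 1 by rewrite ltW // (lt_le_trans t_lt) // ge_min lexx orbT.
have Qt : in_conv pt [set: T] (p + t *: e).
  exists (fun u => (1 - t) * beta u + t * (u == v)%:R); split => //.
  - split; first by move=> u; rewrite addr_ge0 // mulr_ge0 ?subr_ge0 ?ler0n // ltW.
    by rewrite big_split /= -!mulr_sumr b1 sum_delta; ring.
  - by move=> u; rewrite inE.
  - by rewrite lincombD lincomb_delta -/p /e; apply/rowP => k; rewrite !mxE; ring.
case: tri => _ _ _ cover _.
have [C CD Ct] := cover _ Qt.
have Cp : in_conv pt C p.
  by have := near0 C t; rewrite ltW //= t_del scale0r addr0; apply.
have AC := face_sub_of_pos_weights AD CD (conj b_ge0 b1) bA b_neq0 Cp.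
exists C => //; rewrite properEneq AC andbT; apply/eqP => eqAC.
move: Ct; rewrite -eqAC => -[c [[_ c1] cA ct]].
apply: vA; exists (fun u => t^-1 * c u + (1 - t^-1) * beta u); split.
- by move=> u uA; rewrite cA // bA // !mulr0 addr0.
- by rewrite big_split /= -!mulr_sumr c1 b1; ring.
- rewrite lincombD ct -/p /e; apply/rowP => k; rewrite !mxE; field.
  exact: lt0r_neq0.
Qed.

Lemma face_extend (A : {set T}) : A \in D -> ~ fulldim R pt A ->
  exists2 C, C \in D & A \proper C.
Proof.
move=> AD A_low; have [A0|A0] := eqVneq A set0; last exact: face_grow.
have [v _] := not_fulldim A_low.
case: tri => _ singleton _ _ _; exists [set v] => //.
by rewrite A0 proper0; apply/set0Pn; exists v; rewrite set11.
Qed.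

Lemma face_sub_fulldim (A : {set T}) : A \in D ->
  exists2 B, B \in D & A \subset B /\ fulldim R pt B.
Proof.
have [n] := ubnP (#|T| - #|A|); elim: n A => // n IH A lt_n AD.
case: (classic (fulldim R pt A)) => [A_full|A_low]; first by exists A.
have [C CD AC] := face_extend AD A_low.
have [|B BD [CB B_full]] := IH C _ CD.
  by have := proper_card AC; have := max_card C; lia.
by exists B => //; split => //; apply: subset_trans (proper_sub AC) CB.
Qed.

End Faces.

Lemma sum_neq0_witness (V : nmodType) (T : finType) (f : T -> V) :
  \sum_v f v != 0 -> exists a, f a != 0.
Proof.
move=> /eqP sum_neq0; apply: NNPP => f0; apply: sum_neq0; apply: big1 => v _.
by apply: NNPP => fv; apply: f0; exists v; apply/eqP.
Qed.

Lemma int_sum1_delta (T : finType) (f : T -> int) : (forall v, 0 <= f v) -> \sum_v f v = 1 ->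
  exists a, forall v, f v = (v == a)%:R.
Proof.
move=> f_ge0 f1.
have [a fa] : exists a, f a != 0 by apply: sum_neq0_witness; rewrite f1.
exists a; move: f1; rewrite (bigD1 a) //=.
have := f_ge0 a; have : 0 <= \sum_(v | v != a) f v by apply: sumr_ge0 => v _.
set s := \sum_(v | v != a) f v => s_ge0 fa_ge0 f1.
have [fa1 s0] : f a = 1 /\ s = 0 by lia.
move=> v; have [->|va] := eqVneq v a; first by rewrite fa1.
by rewrite (psumr_eq0P (fun i _ => f_ge0 i) s0).
Qed.

Lemma int_sum2_delta (T : finType) (f : T -> int) : (forall v, 0 <= f v) -> \sum_v f v = 2 ->
  exists a b, forall v, f v = (v == a)%:R + (v == b)%:R.
Proof.
move=> f_ge0 f2.
have [a fa] : exists a, f a != 0 by apply: sum_neq0_witness; rewrite f2.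
have [b fb] : exists b, forall v, f v - (v == a)%:R = (v == b)%:R.
  apply: int_sum1_delta => [v|]; last by rewrite sumrB f2 sum_delta.
  have [->|_] := eqVneq v a; last by rewrite subr0.
  by have := f_ge0 a; lia.
by exists a, b => v; rewrite -fb addrC subrK.
Qed.

Definition exchange (R : realFieldType) (T : finType) (m : T -> R) (t : R) (u1 u2 v1 v2 : T)
    (v : T) : R :=
  m v + t * ((v == v1)%:R + (v == v2)%:R - (v == u1)%:R - (v == u2)%:R).

Lemma sum_exchange (R : realFieldType) (T : finType) (m : T -> R) t u1 u2 v1 v2 (f : T -> R) :
  \sum_v exchange m t u1 u2 v1 v2 v * f v =
  \sum_v m v * f v + t * (f v1 + f v2 - (f u1 + f u2)).
Proof.
rewrite /exchange; under eq_bigr do rewrite mulrDl -mulrA !mulrBl mulrDl.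
by rewrite big_split /= -mulr_sumr !sumrB big_split /= !sum_delta_mul opprD addrA.
Qed.

Lemma exchange_convex (R : realFieldType) (T : finType) (m : T -> R) t u1 u2 v1 v2 :
  convex_weights m -> u1 != u2 -> 0 <= t -> t <= m u1 -> t <= m u2 ->
  convex_weights (exchange m t u1 u2 v1 v2).
Proof.
move=> [m_ge0 m1] u12 t_ge0 t_u1 t_u2; split; last first.
  have := sum_exchange m t u1 u2 v1 v2 (fun _ => 1).
  by rewrite !(eq_bigr _ (fun v _ => mulr1 _)) => ->; rewrite m1 subrr mulr0 addr0.
move=> v; rewrite /exchange; have := ler0n R (v == v1); have := ler0n R (v == v2).
have := m_ge0 v; have [->|vu1] := eqVneq v u1.
  by rewrite (negbTE u12) /= ?mulr1n ?mulr0n => *; nra.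
have [->|vu2] := eqVneq v u2; rewrite /= ?mulr1n ?mulr0n => *; nra.
Qed.

Section Regularity.
Variables (R : realFieldType) (d : nat) (T : finType) (pt : T -> 'rV[int]_d).

Local Notation rp := (rpt R pt).
Local Notation lc := (@lincomb R d T pt).

Definition midpoint_weights (a b : T) (v : T) : R := 2^-1 * (v == a)%:R + 2^-1 * (v == b)%:R.

Lemma midpoint_weights_convex a b : convex_weights (midpoint_weights a b).
Proof.
split; first by move=> v; rewrite addr_ge0 // mulr_ge0 // ?invr_ge0 ?ler0n.
by rewrite big_split /= -!mulr_sumr !sum_delta; field.
Qed.

Lemma supp_midpoint_weights a b : supp (midpoint_weights a b) = [set a; b].
Proof.
apply/setP => v; rewrite !inE /midpoint_weights.
have h_gt0 : (0 : R) < 2^-1 by rewrite invr_gt0 ltr0n.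
by case: (v == a); case: (v == b);
  rewrite /= ?mulr1 ?mulr0 ?addr0 ?add0r ?eqxx // lt0r_neq0 // ?addr_gt0.
Qed.

Lemma sum_midpoint_weights a b (f : T -> R) :
  \sum_v midpoint_weights a b v * f v = 2^-1 * (f a + f b).
Proof.
rewrite /midpoint_weights; under eq_bigr do rewrite mulrDl -!mulrA.
by rewrite big_split /= -!mulr_sumr !sum_delta_mul mulrDr.
Qed.

Lemma lincomb_midpoint_weights a b : lc (midpoint_weights a b) = 2^-1 *: (rp a + rp b).
Proof. by rewrite lincombD !lincomb_delta scalerDr. Qed.

Lemma rpt_add2 a b u1 u2 : pt a + pt b = pt u1 + pt u2 -> rp a + rp b = rp u1 + rp u2.
Proof. by move=> eq_ab; rewrite /rpt -!map_mxD eq_ab. Qed.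

Lemma regular_edge_ineq (D : {set {set T}}) (w : T -> R) : regular_for pt w D ->
  forall v1 v2 u1 u2, [set v1; v2] \in D -> [set u1; u2] != [set v1; v2] ->
  pt v1 + pt v2 = pt u1 + pt u2 -> w v1 + w v2 < w u1 + w u2.
Proof.
move=> reg v1 v2 u1 u2 vD uv eq_pt.
have := reg _ _ (midpoint_weights_convex v1 v2) (midpoint_weights_convex u1 u2).
rewrite -[X in X \in D]/(supp _) !lincomb_midpoint_weights (rpt_add2 eq_pt).
rewrite supp_midpoint_weights !sum_midpoint_weights ltr_pM2l ?invr_gt0 ?ltr0n //; apply => //.
apply: NNPP => same; case/eqP: uv.
rewrite -(supp_midpoint_weights u1) -(supp_midpoint_weights v1); apply/setP => v.
rewrite !inE; congr (_ != 0); apply: NNPP => ne; apply: same; exists v; exact/eqP.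
Qed.

Variables (D : {set {set T}}) (w : T -> R).
Hypotheses (pt_inj : injective pt) (vertices : is_vertex_set R pt)
  (tri : triangulation R pt D) (unimod : unimodular R pt D) (flagD : flag D).

Lemma vertex_not_midpoint v u1 u2 : u1 != u2 -> pt v + pt v = pt u1 + pt u2 -> False.
Proof.
move=> u12 eq_pt.
have u1v : u1 != v.
  by apply: contraNneq u12 => u1v; move: eq_pt; rewrite u1v => /addrI/pt_inj ->.
have u2v : u2 != v.
  by apply: contraNneq u12 => u2v; move: eq_pt; rewrite u2v => /addIr/pt_inj ->.
apply: (vertices (v := v)); exists (midpoint_weights u1 u2); split.
- exact: midpoint_weights_convex.
- move=> v'; rewrite !inE negbK => /eqP ->.
  by rewrite /midpoint_weights eq_sym (negbTE u1v) eq_sym (negbTE u2v) !mulr0 addr0.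
- rewrite lincomb_midpoint_weights -(rpt_add2 eq_pt) -mulr2n -scaler_nat.
  by rewrite scalerA mulVf ?scale1r // pnatr_eq0.
Qed.

(* By unimodularity the doubled barycentric coordinates of (u1 + u2) / 2 in a full-dimensional
   face are integers; being nonnegative with sum 2, they are two unit vectors. *)
Lemma midpoint_edge u1 u2 :
  exists v1 v2, [set v1; v2] \in D /\ pt v1 + pt v2 = pt u1 + pt u2.
Proof.
case: (tri) => closed _ indep cover _.
have [A AD [lam [[lam_ge0 lam1] lamA lam_mid]]] :
    exists2 A, A \in D & in_conv pt A (lc (midpoint_weights u1 u2)).
  apply: cover; exists (midpoint_weights u1 u2); split => //.
    exact: midpoint_weights_convex.
  by move=> v; rewrite inE.
have [B BD [AB B_full]] := face_sub_fulldim tri AD.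
have [k1 [k1B k1_1 k1_pt]] := unimod BD B_full (B_full u1).
have [k2 [k2B k2_1 k2_pt]] := unimod BD B_full (B_full u2).
pose kap v := k1 v + k2 v.
have kap_pt : \sum_v kap v *: pt v = pt u1 + pt u2.
  by rewrite -k1_pt -k2_pt -big_split; apply: eq_bigr => v _; rewrite scalerDl.
have kap_lam : (fun v => (kap v)%:~R) =1 (fun v => 2 * lam v).
  apply: (aff_indep_eq (indep _ BD)).
  - by move=> v vB; rewrite /kap k1B // k2B.
  - by move=> v vB; rewrite lamA ?mulr0 //; apply: contra vB; apply: (subsetP AB).
  - by rewrite -mulr_sumr lam1 mulr1 -rmorph_sum big_split /= k1_1 k2_1.
  - rewrite lincombZ lam_mid lincomb_int kap_pt lincomb_midpoint_weights.
    by rewrite scalerA mulfV ?pnatr_eq0 // scale1r map_mxD.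
have [v1 [v2 kapE]] : exists v1 v2, forall v, kap v = (v == v1)%:R + (v == v2)%:R.
  apply: int_sum2_delta; last by rewrite big_split /= k1_1 k2_1.
  by move=> v; rewrite -(ler0z R) kap_lam mulr_ge0.
have kapA v : kap v != 0 -> v \in A.
  by apply: contraR => vA; rewrite -(intr_eq0 R) kap_lam lamA ?mulr0.
have v1A : v1 \in A by apply: kapA; rewrite kapE eqxx; case: (v1 == v2).
have v2A : v2 \in A by apply: kapA; rewrite kapE eqxx addrC; case: (v2 == v1).
exists v1, v2; split; first by apply: (closed _ _ AD); rewrite subUset !sub1set v1A.
rewrite -kap_pt; under eq_bigr do rewrite kapE scalerDl.
by rewrite big_split /= !sum_delta_scale.
Qed.

Lemma midpoint_proper_edge u1 u2 : u1 != u2 ->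
  exists v1 v2, [/\ v1 != v2, [set v1; v2] \in D & pt v1 + pt v2 = pt u1 + pt u2].
Proof.
move=> u12; have [v1 [v2 [vD eq_pt]]] := midpoint_edge u1 u2.
exists v1, v2; split => //; apply/eqP => v12.
by apply: (vertex_not_midpoint u12); rewrite -eq_pt v12.
Qed.

Lemma nonface_nonedge (A : {set T}) : A \notin D ->
  exists u1 u2, [/\ u1 \in A, u2 \in A, u1 != u2 & [set u1; u2] \notin D].
Proof.
move=> AD; apply: NNPP => all_edges; case/negP: AD; apply: flagD => u1 u2 u1A u2A.
have [<-|u12] := eqVneq u1 u2; first by rewrite setUid; case: tri.
by apply: NNPP => uD; apply: all_edges; exists u1, u2; split => //; apply/negP.
Qed.

Hypothesis edge_ineq : forall v1 v2 u1 u2 : T,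
  v1 != v2 -> [set v1; v2] \in D -> [set u1; u2] != [set v1; v2] ->
  pt v1 + pt v2 = pt u1 + pt u2 -> w v1 + w v2 < w u1 + w u2.

Lemma cost_descent (m : T -> R) : convex_weights m -> supp m \notin D ->
  exists m', [/\ convex_weights m', lc m' = lc m & \sum_v m' v * w v < \sum_v m v * w v].
Proof.
move=> mw mD; have [u1 [u2 [u1m u2m u12 uD]]] := nonface_nonedge mD.
have [v1 [v2 [v12 vD eq_pt]]] := midpoint_proper_edge u12.
have uv : [set u1; u2] != [set v1; v2] by apply: contraNneq uD => ->.
have w_lt := edge_ineq v12 vD uv eq_pt.
have [m_u1 m_u2] : 0 < m u1 /\ 0 < m u2.
  by case: mw => m_ge0 _; move: u1m u2m; rewrite !inE !lt0r !m_ge0 => -> ->.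
pose t := Num.min (m u1) (m u2).
have t_gt0 : 0 < t by rewrite lt_min m_u1.
have t_u1 : t <= m u1 by rewrite ge_min lexx.
have t_u2 : t <= m u2 by rewrite ge_min lexx orbT.
exists (exchange m t u1 u2 v1 v2); split.
- exact: exchange_convex mw u12 (ltW t_gt0) t_u1 t_u2.
- apply/rowP => k; rewrite !lincomb_coord sum_exchange.
  have := congr1 (fun M : 'rV[R]_d => M 0 k) (rpt_add2 eq_pt); rewrite !mxE => ->.
  by rewrite subrr mulr0 addr0.
- by rewrite sum_exchange gtrDl pmulr_rlt0 // subr_lt0.
Qed.

Lemma edge_ineq_regular : regular_for pt w D.
Proof.
move=> l m lw mw lm lD [v0 mv0].
have l_rep : conv_rep rp (lc l) [set: T] l by split => // v; rewrite inE.
have [c0 [[c0w _ c0l] c0min]] := conv_rep_min w (ex_intro _ l l_rep).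
have c0D : supp c0 \in D.
  apply: contraT => c0D; have [c [cw cc0 c_lt]] := cost_descent c0w c0D.
  have c_rep : conv_rep rp (lc l) [set: T] c.
    by split => //; [move=> v; rewrite inE | exact: etrans cc0 c0l].
  by have := c0min c c_rep; rewrite leNgt c_lt.
have c0_l := face_rep_uniq tri c0w lw c0l c0D lD.
have mD : supp m \notin D.
  by apply: contraNN mv0 => mD; rewrite (face_rep_uniq tri mw lw (esym lm) mD lD).
have [m' [m'w m'm m'_lt]] := cost_descent mw mD; apply: le_lt_trans m'_lt.
under eq_bigr do rewrite -c0_l.
by apply: c0min; split => //; [move=> v; rewrite inE | exact: etrans m'm (esym lm)].
Qed.

End Regularity.

Theorem lemma3p3 (R : realFieldType) (d : nat) (T : finType)
    (pt : T -> 'rV[int]_d) (D : {set {set T}}) (w : T -> R) :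
  injective pt ->
  is_vertex_set R pt ->
  triangulation R pt D ->
  unimodular R pt D ->
  flag D ->
  (regular_for pt w D <->
   (forall v1 v2 u1 u2 : T,
      v1 != v2 -> [set v1; v2] \in D ->
      [set u1; u2] != [set v1; v2] ->
      pt v1 + pt v2 = pt u1 + pt u2 ->
      w v1 + w v2 < w u1 + w u2)).
Proof.
move=> pt_inj vertices tri unimod flagD; split => [reg v1 v2 u1 u2 _|].
  exact: regular_edge_ineq.
exact: edge_ineq_regular.
Qed.
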